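(* Let $\beta,\lambda\ge0$ with $\lambda+\beta>0$, let $\gamma\ge 0$ and $x\in\mathbb{R}$ with $x^2\le\gamma^2$, and let $f(\lambda)=\frac{\lambda\beta}{\lambda+\beta}+x^2$. Then (1) $f(\lambda)\le\beta+\gamma^2$; (2) $f(\lambda)\le\lambda+\gamma^2$; (3) $f(\lambda)\le\max\Big\{\lambda,\ \frac{3\gamma^2+\sqrt{\gamma^4+4\gamma^2\beta}}{2}\Big\}$. *)

From Stdlib Require Import Reals.
Open Scope R_scope.

Definition f_lemma6 (beta x lam : R) : R := lam * beta / (lam + beta) + x ^ 2.

From Stdlib Require Import Reals Lra Psatz.
Open Scope R_scope.

(* Bounds (1) and (2) hold because the harmonic-type term [lam*beta/(lam+beta)]
   lies below both [lam] and [beta].  For (3), suppose [y := f lam > lam].  Since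
   [z |-> z*beta/(z+beta)] is nondecreasing, [y - x^2 <= lam*beta/(lam+beta)
   <= y*beta/(y+beta)], i.e. [y^2 - c*y - c*beta <= 0] with [c := gamma^2], so
   [y] is below the positive root [(c + sqrt (c^2 + 4*c*beta))/2] of that quadratic,
   which is [c] less than the bound claimed. *)

Section HarmonicTerm.

Variables a b : R.
Hypotheses (ha : 0 <= a) (hb : 0 <= b) (hab : 0 < a + b).

Lemma harmonic_term_mul : a * b / (a + b) * (a + b) = a * b.
Proof. field; lra. Qed.

Lemma harmonic_term_ge0 : 0 <= a * b / (a + b).
Proof.
apply Rmult_le_pos; [nra | apply Rlt_le, Rinv_0_lt_compat; lra].
Qed.

Lemma harmonic_term_le_l : a * b / (a + b) <= a.
Proof. pose proof harmonic_term_mul; pose proof harmonic_term_ge0; nra. Qed.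

Lemma harmonic_term_le_r : a * b / (a + b) <= b.
Proof. pose proof harmonic_term_mul; pose proof harmonic_term_ge0; nra. Qed.

Lemma harmonic_term_le_mono (y : R) :
  a <= y -> a * b / (a + b) * (y + b) <= y * b.
Proof. pose proof harmonic_term_mul; pose proof harmonic_term_ge0; nra. Qed.

End HarmonicTerm.

Lemma le_quadratic_root (b c y : R) :
  0 <= b -> 0 <= c -> y * y - c * y - c * b <= 0 ->
  y <= (c + sqrt (c ^ 2 + 4 * c * b)) / 2.
Proof.
intros hb hc hy.
assert (hD : 0 <= c ^ 2 + 4 * c * b) by nra.
pose proof (sqrt_pos (c ^ 2 + 4 * c * b)) as hs0.
pose proof (sqrt_sqrt _ hD) as hs.
destruct (Rle_or_lt (2 * y - c) (sqrt (c ^ 2 + 4 * c * b))) as [h | h]; [lra |].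
nra.
Qed.

Theorem lemma6 (beta lam gamma x : R)
  (hbeta : 0 <= beta) (hlam : 0 <= lam) (hsum : 0 < lam + beta)
  (hgamma : 0 <= gamma) (hx : x ^ 2 <= gamma ^ 2) :
  f_lemma6 beta x lam <= beta + gamma ^ 2 /\
  f_lemma6 beta x lam <= lam + gamma ^ 2 /\
  f_lemma6 beta x lam <=
    Rmax lam ((3 * gamma ^ 2 + sqrt (gamma ^ 4 + 4 * gamma ^ 2 * beta)) / 2).
Proof.
unfold f_lemma6.
pose proof (harmonic_term_le_l lam beta hlam hbeta hsum).
pose proof (harmonic_term_le_r lam beta hlam hbeta hsum).
split; [lra | split; [lra |]].
set (y := lam * beta / (lam + beta) + x ^ 2).
destruct (Rle_or_lt y lam) as [hy | hy].
{ apply Rle_trans with lam; [exact hy | apply Rmax_l]. }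
apply Rle_trans with (2 := Rmax_r _ _).
pose proof (harmonic_term_le_mono lam beta hlam hbeta hsum y (Rlt_le _ _ hy)) as hmono.
assert (hroot : y <= (gamma ^ 2 + sqrt ((gamma ^ 2) ^ 2 + 4 * gamma ^ 2 * beta)) / 2).
{ apply le_quadratic_root; [exact hbeta | nra |].
  assert (y - gamma ^ 2 <= lam * beta / (lam + beta)) by (unfold y; lra).
  pose proof (harmonic_term_ge0 lam beta hlam hbeta hsum); nra. }
replace ((gamma ^ 2) ^ 2) with (gamma ^ 4) in hroot by ring.
assert (0 <= gamma ^ 2) by nra.
lra.
Qed.
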